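(* Let $K$ be a knot admitting a non-trivial coloring by some quandle $X$, and let $D$ be a diagram of $K$. Then the $1$-tangle obtained by cutting any one arc of $D$ at a single point (not at a crossing) is persistent: every knot that has a diagram containing this $1$-tangle is non-trivial.
   Context: A knot is a $1$-component link in $S^3$. A coloring of a knot $K$ by a quandle $X$ is a quandle homomorphism from the fundamental quandle of $K$ to $X$; it is non-trivial if its image has more than one element. Diagrammatically, an $X$-coloring of an oriented diagram assigns an element of $X$ to each arc so that at each crossing with over-arc colored $a$ and incoming under-arc colored $b$, the outgoing under-arc is colored $b\ast a$ (or $b\,\bar{\ast}\, a$ depending on the crossing sign); it is non-trivial if more than one color is used. A tangle ($1$-tangle, resp. $2$-tangle) is an embedding of one (resp. two) arc(s) in a $3$-ball with the endpoints fixed on the boundary sphere, up to ambient isotopy fixing the endpoints; diagrammatically, a piece of knot diagram in a disc with endpoints on the boundary circle, up to Reidemeister moves inside the disc fixing the endpoints. A knot diagram contains a tangle $T$ if there is a disc in the plane whose intersection with the diagram is a diagram of $T$. A tangle $T$ is persistent if every knot admitting a diagram that contains $T$ is non-trivial. *)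

(* Knot diagrams are encoded combinatorially as planar Morse ("sliced")
   diagrams; knot equivalence is Reidemeister equivalence (Reidemeister /
   Turaev theorems). *)
From mathcomp Require Import all_boot.
From Stdlib Require Import Relations.
From Stdlib Require List.
Set Implicit Arguments. Unset Strict Implicit. Unset Printing Implicit Defensive.

Record quandle := Quandle {
  qT :> Type;
  qop : qT -> qT -> qT;
  qidem : forall x, qop x x = x;
  qbij : forall y, bijective (fun x => qop x y);
  qdist : forall x y z, qop (qop x y) z = qop (qop x z) (qop y z)
}.

(** * Oriented planar diagrams in Morse position
   A diagram is read bottom to top as a list of slices.  At each height the
   diagram meets a horizontal line in finitely many points, recorded by their
   orientations (true = strand oriented upwards).  A slice [(k, e)] applies the
   elementary piece [e] to the strands at positions k, k+1, ... and is the
   identity on the other strands: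
   - [Cup o]   : a local minimum creating two new strands at positions k, k+1
                 with orientations (o, ~~o);
   - [Cap]     : a local maximum joining strands k and k+1 (which must have
                 opposite orientations);
   - [Cross b] : a crossing exchanging strands k and k+1; [b = true] means the
                 strand coming from the bottom-left (going to the top-right)
                 is the over-strand. *)
Inductive elem := Cup of bool | Cap | Cross of bool.
Definition slice := (nat * elem)%type.
Definition word := seq slice.

Definition ein (e : elem) : nat := match e with Cup _ => 0 | _ => 2 end.
Definition eout (e : elem) : nat := match e with Cap => 0 | _ => 2 end.

Definition step_or (st : seq bool) (x : slice) : option (seq bool) :=
  let: (k, e) := x in
  if k + ein e <= size st then
    let l := take k st in
    let r := drop (k + ein e) st in
    match e with
    | Cup o => Some (l ++ [:: o; ~~ o] ++ r)
    | Cap => if nth false st k != nth false st k.+1 then Some (l ++ r) else None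
    | Cross _ => Some (l ++ [:: nth false st k.+1; nth false st k] ++ r)
    end
  else None.

Fixpoint run (st : seq bool) (w : word) : option (seq bool) :=
  match w with
  | [::] => Some st
  | x :: w' => if step_or st x is Some st' then run st' w' else None
  end.

Definition valid (a : seq bool) (w : word) (b : seq bool) : Prop := run a w = Some b.

Definition shift (n : nat) (w : word) : word := [seq (n + x.1, x.2) | x <- w].

(** Number of closed components of a diagram (boundary strands get distinct
    labels; a cap joining two ends with the same label closes a component). *)
Fixpoint comp_aux (ls : seq nat) (fresh : nat) (w : word) : nat :=
  match w with
  | [::] => 0
  | (k, e) :: w' =>
    match e with
    | Cup _ => comp_aux (take k ls ++ [:: fresh; fresh] ++ drop k ls) fresh.+1 w'
    | Cap =>
      let a := nth 0 ls k in let b := nth 0 ls k.+1 in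
      let ls' := take k ls ++ drop k.+2 ls in
      if a == b then (comp_aux ls' fresh w').+1
      else comp_aux [seq (if l == b then a else l) | l <- ls'] fresh w'
    | Cross _ => comp_aux (take k ls ++ [:: nth 0 ls k.+1; nth 0 ls k] ++ drop k.+2 ls) fresh w'
    end
  end.

Definition closed_comps (a : seq bool) (w : word) : nat :=
  comp_aux (iota 0 (size a)) (size a) w.

Definition knot_diagram (D : word) : Prop :=
  valid [::] D [::] /\ closed_comps [::] D = 1.

Definition one_tangle (e : bool) (t : word) : Prop :=
  valid [:: e] t [:: e] /\ closed_comps [:: e] t = 0.

Inductive move : word -> word -> Prop :=
| mv_far k1 e1 k2 e2 : k1 + eout e1 <= k2 ->
    move [:: (k1, e1); (k2, e2)] [:: (k2 - eout e1 + ein e1, e2); (k1, e1)]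
| mv_snake1 k o : move [:: (k, Cup o); (k.+1, Cap)] [::]
| mv_snake2 k o : move [:: (k.+1, Cup o); (k, Cap)] [::]
| mv_cap_slide k b : move [:: (k, Cross b); (k.+1, Cap)] [:: (k.+1, Cross (~~ b)); (k, Cap)]
| mv_cup_slide k o b : move [:: (k, Cup o); (k.+1, Cross b)] [:: (k.+1, Cup o); (k, Cross (~~ b))]
| mv_R1a k o b : move [:: (k.+1, Cup o); (k, Cross b); (k.+1, Cap)] [::]
| mv_R1b k o b : move [:: (k, Cup o); (k.+1, Cross b); (k, Cap)] [::]
| mv_R2 k b : move [:: (k, Cross b); (k, Cross (~~ b))] [::]
  (* Reidemeister III (over/under data consistent with a height order) *)
| mv_R3 k b1 b2 b3 : ~~ ((b1 == b3) && (b2 != b1)) ->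
    move [:: (k, Cross b1); (k.+1, Cross b2); (k, Cross b3)]
         [:: (k.+1, Cross b3); (k, Cross b2); (k.+1, Cross b1)].

Definition rstep (a b : seq bool) (w w' : word) : Prop :=
  exists p q L R, move L R /\ w = p ++ L ++ q /\ w' = p ++ R ++ q /\
                  valid a w b /\ valid a w' b.

(** Equivalence of tangle diagrams with boundary [a] (bottom) and [b] (top),
    fixing the boundary; for [a = b = [::]] this is equivalence of knots. *)
Definition Equiv (a b : seq bool) : relation word :=
  clos_refl_sym_trans word (rstep a b).

Definition unknot : word := [:: (0, Cup true); (0, Cap)].

Definition nontrivial_knot (D : word) : Prop := ~ Equiv [::] [::] D unknot.

(** * Quandle colorings of diagrams
    Colors are assigned to the points of each height level; over-strands keep
    their color; at a crossing with over-color [a] the under-strand's outgoing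
    color is [in * a] (positive crossing) or [in *bar a] (negative crossing),
    the latter written as [out * a = in]. *)
Definition under_rule (X : quandle) (pos ou : bool) (a bot top : X) : Prop :=
  if ou then (if pos then top = qop bot a else qop top a = bot)
  else (if pos then bot = qop top a else qop bot a = top).

Definition slice_col (X : quandle) (st : seq bool) (c : seq X) (x : slice) (c' : seq X) : Prop :=
  let: (k, e) := x in
  let l := take k c in
  match e with
  | Cup _ => exists y, c' = l ++ [:: y; y] ++ drop k c
  | Cap => match drop k c with y :: z :: r => y = z /\ c' = l ++ r | _ => False end
  | Cross b =>
    match drop k c, drop k st with
    | xL :: xR :: r, oL :: oR :: _ =>
      let pos := (b == (oL == oR)) in   (* crossing sign is positive *)
      if b then exists y, c' = l ++ [:: y; xL] ++ r /\ @under_rule X pos oR xL xR y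
      else exists y, c' = l ++ [:: xR; y] ++ r /\ @under_rule X pos oL xR xL y
    | _, _ => False
    end
  end.

Fixpoint col_ok (X : quandle) (st : seq bool) (c : seq X) (w : word) (cs : seq (seq X)) : Prop :=
  match w, cs with
  | [::], [::] => True
  | x :: w', c' :: cs' =>
      size c = size st /\
      exists st', step_or st x = Some st' /\ @slice_col X st c x c' /\ @col_ok X st' c' w' cs'
  | _, _ => False
  end.

Definition nontriv_colored (X : quandle) (D : word) : Prop :=
  exists cs : seq (seq X), @col_ok X [::] [::] D cs /\
    exists x y : X, x <> y /\ List.In x (flatten cs) /\ List.In y (flatten cs).

(** Closing a 1-tangle [t] (entering at the bottom with orientation [e]) with
    another 1-tangle [s] placed in the complementary disc. *)
Definition closure (e : bool) (t s : word) : word :=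
  (0, Cup e) :: t ++ shift 1 s ++ [:: (0, Cap)].

(** A 1-tangle (given by a diagram [t]) is persistent if every knot having a
    diagram containing (some diagram of) it is non-trivial. *)
Definition persistent (e : bool) (t : word) : Prop :=
  forall t', Equiv [:: e] [:: e] t t' ->
  forall s, one_tangle (~~ e) s -> nontrivial_knot (closure e t' s).

Definition level_or (D : word) (j : nat) : bool :=
  head false (odflt [::] (run [::] (take j D))).

(** The 1-tangle obtained by cutting [D] at a point of the leftmost strand at
    level [j]: the lower half of the cut strand is joined (by a maximum on the
    far left) to a new bottom endpoint, the upper half (by a minimum on the far
    left) to a new top endpoint.  Its orientation is [~~ level_or D j]. *)
Definition cut (D : word) (j : nat) : word :=
  shift 1 (take j D) ++ [:: (0, Cap); (0, Cup (~~ level_or D j))] ++ shift 1 (drop j D).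

(* Quandle colorings survive Reidemeister moves: across a local move a coloring
   transfers to the other side without changing the colors on the boundary of
   the move, and a move whose boundary is monochromatic is monochromatic inside,
   so a non-trivial coloring stays non-trivial.  Cutting a non-trivially colored
   diagram D at a point of color y gives a 1-tangle with a non-trivial coloring
   whose two endpoints have color y.  Closing any diagram of this tangle with a
   1-tangle s, colored constantly y, yields a non-trivially colored diagram,
   whereas every coloring of the unknot is trivial. *)

From Pilot Require Import Defs.
From mathcomp Require Import all_boot zify.
From Stdlib Require Import Classical IndefiniteDescription.
From Stdlib Require List.
Set Implicit Arguments. Unset Strict Implicit. Unset Printing Implicit Defensive.

(** * Quandle actions *)

Section QuandleAction.
Variable X : quandle.

Lemma qop_inverse (y : X) :
  {g : X -> X | cancel (fun x => qop x y) g /\ cancel g (fun x => qop x y)}.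
Proof. by apply: constructive_indefinite_description; case: (qbij y) => g; exists g. Qed.

Definition qdiv (x y : X) : X := sval (qop_inverse y) x.

Lemma qopK (y : X) : cancel (fun x => qop x y) (qdiv^~ y).
Proof. by rewrite /qdiv; case: qop_inverse => g []. Qed.

Lemma qdivK (y : X) : cancel (qdiv^~ y) (fun x => qop x y).
Proof. by rewrite /qdiv; case: qop_inverse => g []. Qed.

Definition qact (s : bool) (x y : X) : X := if s then qop x y else qdiv x y.

Lemma qactK s (y : X) : cancel (qact s ^~ y) (qact (~~ s) ^~ y).
Proof. by case: s => x /=; rewrite ?qopK ?qdivK. Qed.

Lemma qactNK s (y : X) : cancel (qact (~~ s) ^~ y) (qact s ^~ y).
Proof. by case: s => x /=; rewrite ?qopK ?qdivK. Qed.

Lemma qact_inj s (y : X) : injective (qact s ^~ y).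
Proof. exact: can_inj (qactK s y). Qed.

Lemma qact_idem s (x : X) : qact s x x = x.
Proof. by case: s; rewrite /= ?qidem // -{1}(qidem x) qopK. Qed.

Lemma qact_fix s (x y : X) : qact s x y = y -> x = y.
Proof. by rewrite -{2}(qact_idem s y) => /qact_inj. Qed.

Lemma qact_dist s t (x y z : X) :
  qact s (qact t x y) z = qact t (qact s x z) (qact s y z).
Proof.
case: s; case: t => /=; first exact: qdist.
- by apply: (can_inj (qopK (qop y z))) => /=; rewrite qdivK -qdist qdivK.
- by apply: (can_inj (qopK z)) => /=; rewrite qdist !qdivK.
- apply: (can_inj (qopK z)) => /=; rewrite qdivK.
  apply: (can_inj (qopK y)) => /=; rewrite qdivK.
  by rewrite -{2}(qdivK z y) -qdist !qdivK.
Qed.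

Lemma qdiv_idem (x : X) : qdiv x x = x.
Proof. exact: (qact_idem false). Qed.

Lemma under_ruleE pos ou (a bot top : X) :
  under_rule pos ou a bot top <-> top = qact (ou == pos) bot a.
Proof.
rewrite /under_rule; case: ou; case: pos => /=; split=> E;
  by [rewrite E ?qopK ?qdivK | rewrite -E ?qopK ?qdivK].
Qed.

End QuandleAction.

Section SeqCat.
Variable T : Type.
Implicit Types s : seq T.

Lemma takeD_size_cat s1 s2 k : take (size s1 + k) (s1 ++ s2) = s1 ++ take k s2.
Proof. by rewrite takeD take_size_cat // drop_size_cat. Qed.

Lemma dropD_size_cat s1 s2 k : drop (size s1 + k) (s1 ++ s2) = drop k s2.
Proof. by rewrite addnC -drop_drop drop_size_cat. Qed.

Lemma dropl_cat s1 s2 n : n <= size s1 -> drop n (s1 ++ s2) = drop n s1 ++ s2.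
Proof.
rewrite leq_eqVlt => /orP[/eqP->|lt_n]; last by rewrite drop_cat lt_n.
by rewrite drop_size_cat // drop_size.
Qed.

Lemma in_cat (z : T) s1 s2 : List.In z (s1 ++ s2) <-> List.In z s1 \/ List.In z s2.
Proof. exact: List.in_app_iff. Qed.

Lemma split_at s k : k <= size s -> exists sl sr, s = sl ++ sr /\ size sl = k.
Proof. by move=> le_k; exists (take k s), (drop k s); rewrite cat_take_drop size_takel. Qed.

End SeqCat.

(** * Diagrams and their colorings *)

Section Steps.
Implicit Types (st sl sr : seq bool) (w : word).

Lemma step_or_bound st k e st' : step_or st (k, e) = Some st' -> k + ein e <= size st.
Proof. by rewrite /step_or; case: ifP. Qed.

Lemma step_or_size st k e st' :
  step_or st (k, e) = Some st' -> size st' + ein e = size st + eout e.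
Proof.
rewrite /step_or; case: ifP => // le_ke.
case: e le_ke => [o||b] /= le_ke; try case: ifP => // _;
  by case=> <-; rewrite !size_cat /= size_takel ?size_drop; lia.
Qed.

Lemma step_or_shift sl st k e :
  step_or (sl ++ st) (size sl + k, e) = omap (cat sl) (step_or st (k, e)).
Proof.
have nthD i : nth false (sl ++ st) (size sl + i) = nth false st i.
  by rewrite nth_cat ltnNge leq_addr addKn.
rewrite /step_or size_cat -addnA leq_add2l; case: ifP => // _.
rewrite takeD_size_cat dropD_size_cat nthD -addnS nthD.
by case: e => [o||b] /=; rewrite ?catA //; case: ifP => //= _; rewrite catA.
Qed.

Lemma step_or_catr st sr k e : k + ein e <= size st ->
  step_or (st ++ sr) (k, e) = omap (cat^~ sr) (step_or st (k, e)).
Proof.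
move=> le_ke; rewrite /step_or size_cat le_ke (leq_trans le_ke (leq_addr _ _)).
rewrite takel_cat ?dropl_cat; try lia.
case: e le_ke => [o||b] /= le_ke; first by rewrite -!catA.
all: have [lt_k lt_k1] : k < size st /\ k.+1 < size st by lia.
all: rewrite !nth_cat lt_k lt_k1.
  by case: ifP => //= _; rewrite -catA.
by rewrite -!catA.
Qed.

Lemma run_cat st w1 w2 : run st (w1 ++ w2) = obind (run^~ w2) (run st w1).
Proof. by elim: w1 st => [|x w IH] st //=; case: (step_or st x). Qed.

Lemma run_cat_Some st w1 w2 s : run st w1 = Some s -> run st (w1 ++ w2) = run s w2.
Proof. by move=> E; rewrite run_cat E. Qed.

Lemma run_cons st x w :
  run st (x :: w) = if step_or st x is Some st' then run st' w else None.
Proof. by []. Qed.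

Lemma run_step st x w st' : step_or st x = Some st' -> run st (x :: w) = run st' w.
Proof. by rewrite run_cons => ->. Qed.

Lemma run_shift sl st w : run (sl ++ st) (shift (size sl) w) = omap (cat sl) (run st w).
Proof.
elim: w st => [|[k e] w IH] st //.
by rewrite /shift map_cons -/(shift _ _) !run_cons step_or_shift; case: step_or.
Qed.

Lemma run_catr st sr w st' : run st w = Some st' -> run (st ++ sr) w = Some (st' ++ sr).
Proof.
elim: w st => [|[k e] w IH] st; first by case=> <-.
rewrite !run_cons; case E: (step_or st (k, e)) => [s1|] // H.
by rewrite step_or_catr ?E /=; [exact: IH | exact: step_or_bound E].
Qed.

Lemma step_cup0 o st : step_or st (0, Cup o) = Some (o :: ~~ o :: st).
Proof. by rewrite /step_or /= ?take0 ?drop0. Qed.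
Lemma step_cup1 o a st : step_or (a :: st) (1, Cup o) = Some (a :: o :: ~~ o :: st).
Proof. by rewrite /step_or /= ?take0 ?drop0. Qed.
Lemma step_cap0 a b st : step_or (a :: b :: st) (0, Cap) = if a != b then Some st else None.
Proof. by rewrite /step_or /= ?take0 ?drop0. Qed.
Lemma step_cap0_negr o st : step_or (o :: ~~ o :: st) (0, Cap) = Some st.
Proof. by rewrite step_cap0; case: o. Qed.
Lemma step_cap0_negl o st : step_or (~~ o :: o :: st) (0, Cap) = Some st.
Proof. by rewrite step_cap0; case: o. Qed.
Lemma step_cap1 a0 a b st :
  step_or (a0 :: a :: b :: st) (1, Cap) = if a != b then Some (a0 :: st) else None.
Proof. by rewrite /step_or /= ?take0 ?drop0. Qed.
Lemma step_cross0 x a b st : step_or (a :: b :: st) (0, Cross x) = Some (b :: a :: st).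
Proof. by rewrite /step_or /= ?take0 ?drop0. Qed.
Lemma step_cross1 x a0 a b st :
  step_or (a0 :: a :: b :: st) (1, Cross x) = Some (a0 :: b :: a :: st).
Proof. by rewrite /step_or /= ?take0 ?drop0. Qed.

End Steps.

Section Colorings.
Variable X : quandle.
Implicit Types (st sl sr : seq bool) (c cl cr : seq X) (cs : seq (seq X)) (w : word).

Definition cross_colors (b oL oR : bool) (xL xR : X) : seq X :=
  if b then [:: qact oL xR xL; xL] else [:: xR; qact (~~ oR) xL xR].

Lemma slice_col_crossE st c k b c' : slice_col st c (k, Cross b) c' <->
  match drop k c, drop k st with
  | xL :: xR :: r, oL :: oR :: _ => c' = take k c ++ cross_colors b oL oR xL xR ++ r
  | _, _ => False
  end.
Proof.
rewrite /slice_col; case: (drop k c) => [|xL [|xR r]] //.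
case: (drop k st) => [|oL [|oR s]] //; rewrite /cross_colors.
case: b; split=> [[y [-> /under_ruleE ->]] | ->];
  try (eexists; split; first reflexivity; apply/under_ruleE);
  by case: oL; case: oR.
Qed.

Lemma slice_col_size st c x st' c' : size c = size st -> step_or st x = Some st' ->
  slice_col st c x c' -> size c' = size st'.
Proof.
case: x => k e Hs; rewrite /step_or; case: ifP => // le_ke.
case: e le_ke => [o||b] le_ke.
- by case=> <- [y ->]; rewrite !size_cat /= !size_take !size_drop Hs; lia.
- case: ifP => // _ [<-] /=.
  case E: (drop k c) => [|y [|z r]] // [_ ->].
  have := congr1 size E; rewrite !size_cat !size_take !size_drop /= Hs; lia.
- case=> <- /slice_col_crossE.
  case E: (drop k c) => [|y [|z r]] //; case: (drop k st) => [|oL [|oR s]] // ->.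
  have := congr1 size E; rewrite !size_cat !size_take !size_drop /= Hs.
  by case: b le_ke; rewrite /cross_colors /= size_drop; lia.
Qed.

Lemma col_ok_cons st c x w cs : col_ok st c (x :: w) cs <->
  exists c' cs', cs = c' :: cs' /\ size c = size st /\
    exists st', step_or st x = Some st' /\ slice_col st c x c' /\ col_ok st' c' w cs'.
Proof.
case: cs => [|c' cs] /=; first by split=> // -[c' [cs' []]].
by split=> [H | [c'' [cs' [[<- <-] H]]]]; first exists c', cs.
Qed.

Lemma col_ok_step st c x w cs st' : step_or st x = Some st' ->
  col_ok st c (x :: w) cs <->
  exists c' cs', cs = c' :: cs' /\ size c = size st /\ slice_col st c x c' /\ col_ok st' c' w cs'.
Proof.
move=> E; rewrite col_ok_cons; split.
  by case=> c' [cs' [-> [Hs [s [E' H]]]]]; move: E' H; rewrite E => -[<-]; exists c', cs'.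
by case=> c' [cs' [-> [Hs H]]]; exists c', cs'; do 2 split => //; exists st'.
Qed.

Lemma col_ok_cat st c w1 w2 cs : col_ok st c (w1 ++ w2) cs <->
  exists cs1 cs2 st1, [/\ cs = cs1 ++ cs2, col_ok st c w1 cs1, run st w1 = Some st1 &
                          col_ok st1 (last c cs1) w2 cs2].
Proof.
elim: w1 st c cs => [|x w IH] st c cs.
  split=> [H | [cs1 [cs2 [st1 [-> H1 [<-]]]]]]; first by exists [::], cs, st.
  by case: cs1 H1.
rewrite cat_cons col_ok_cons run_cons; split.
- case=> c' [cs' [-> [Hs [s1 [E [Hc /IH [cs1 [cs2 [st1 [-> H1 R H2]]]]]]]]]].
  exists (c' :: cs1), cs2, st1; rewrite E; split => //.
  by apply/col_ok_cons; exists c', cs1; do 2 split => //; exists s1.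
- case=> [[|c' cs1] [cs2 [st1 [-> /col_ok_cons H1 R H2]]]]; first by case: H1 => ? [? []].
  case: H1 => _ [_ [[<- <-] [Hs [s1 [E [Hc H1]]]]]]; move: R; rewrite E => R.
  exists c', (cs1 ++ cs2); do 2 split => //; exists s1; do 2 split => //.
  by apply/IH; exists cs1, cs2, st1.
Qed.

Lemma col_ok_size st c w cs st' : col_ok st c w cs -> size c = size st ->
  run st w = Some st' -> size (last c cs) = size st'.
Proof.
elim: w st c cs => [|x w IH] st c cs; first by case: cs => // _ Hs [<-].
case/col_ok_cons=> c' [cs' [-> [_ [s1 [E [Hc H]]]]]] Hs.
rewrite (run_step _ E); apply: IH H _; exact: slice_col_size Hs E Hc.
Qed.

Lemma slice_col_shift sl st cl c k e c' : size cl = size sl ->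
  slice_col (sl ++ st) (cl ++ c) (size sl + k, e) c' <->
  exists c0, c' = cl ++ c0 /\ slice_col st c (k, e) c0.
Proof.
move=> Hcl; rewrite -Hcl; case: e => [o||b].
- rewrite /= takeD_size_cat dropD_size_cat; split.
    by case=> y ->; eexists; split; [rewrite -catA; reflexivity | exists y].
  by case=> c0 [-> [y ->]]; exists y; rewrite catA.
- rewrite /= takeD_size_cat dropD_size_cat.
  case: (drop k c) => [|y [|z r]]; [by split=> // -[? []] | by split=> // -[? []] | split].
  + by move=> [<- ->]; exists (take k c ++ r); rewrite catA.
  + by case=> c0 [-> [-> ->]]; rewrite catA.
- rewrite slice_col_crossE takeD_size_cat dropD_size_cat Hcl dropD_size_cat.
  split=> [|[c0 [-> /slice_col_crossE]]].
    case E1: (drop k c) => [|y [|z r]] //; case E2: (drop k st) => [|oL [|oR s]] // ->.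
    by eexists; split; last (apply/slice_col_crossE; rewrite E1 E2; reflexivity); rewrite !catA.
  by case: (drop k c) => [|y [|z r]] //; case: (drop k st) => [|oL [|oR s]] // ->; rewrite !catA.
Qed.

Lemma col_ok_shift sl st cl c w cs : size cl = size sl ->
  col_ok (sl ++ st) (cl ++ c) (shift (size sl) w) cs <->
  exists cs0, cs = map (cat cl) cs0 /\ col_ok st c w cs0.
Proof.
move=> Hcl; elim: w st c cs => [|[k e] w IH] st c cs.
  case: cs => [|c' cs]; split=> //=; first by exists [::].
  by case=> -[|? ?] [].
rewrite /shift map_cons -/(shift _ _) !col_ok_cons step_or_shift; split.
- case=> c' [cs' [-> [Hs [s1 [E [Hc Hw]]]]]].
  case E0: (step_or st (k, e)) E Hw => [s0|] // [<-] Hw.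
  move/slice_col_shift: Hc Hw => /(_ Hcl) [c0 [-> Hc]] Hw.
  case/IH: Hw => cs0 [-> Hw].
  exists (c0 :: cs0); split => //; apply/col_ok_cons; exists c0, cs0; split => //; split.
    by move: Hs; rewrite !size_cat Hcl => /eqP; rewrite eqn_add2l => /eqP.
  by exists s0.
- case=> _ [-> /col_ok_cons [c0 [cs1 [-> [Hs [s0 [E [Hc Hw]]]]]]]].
  exists (cl ++ c0), (map (cat cl) cs1); split => //; split; first by rewrite !size_cat Hcl Hs.
  exists (sl ++ s0); rewrite E; split => //; split.
    by apply/slice_col_shift => //; exists c0.
  by apply/IH; exists cs1.
Qed.

Lemma slice_col_catr st sr c cr k e c'' : size c = size st -> k + ein e <= size st ->
  slice_col (st ++ sr) (c ++ cr) (k, e) c'' <->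
  exists c', c'' = c' ++ cr /\ slice_col st c (k, e) c'.
Proof.
move=> Hs le_ke; case: e le_ke => [o||b] le_ke; rewrite /= in le_ke.
- rewrite /= takel_cat ?dropl_cat; try lia.
  split=> [[y ->] | [c' [-> [y ->]]]]; last by exists y; rewrite -!catA.
  by exists (take k c ++ [:: y; y] ++ drop k c); split; [rewrite -!catA | exists y].
- have : 2 <= size (drop k c) by rewrite size_drop; lia.
  rewrite /= takel_cat ?dropl_cat; try lia.
  case: (drop k c) => [|y [|z r]] // _ /=.
  split; first by case=> -> ->; exists (take k c ++ r); rewrite -catA.
  by case=> c' [-> [-> ->]]; rewrite -catA.
- have : 2 <= size (drop k c) by rewrite size_drop; lia.
  have : 2 <= size (drop k st) by rewrite size_drop; lia.
  rewrite slice_col_crossE takel_cat ?dropl_cat; try lia.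
  case E2: (drop k st) => [|oL [|oR s]] // _; case E1: (drop k c) => [|y [|z r]] // _.
  split=> [-> | [c' [-> /slice_col_crossE]]]; last by rewrite E1 E2 => ->; rewrite -!catA.
  by eexists; split; last (apply/slice_col_crossE; rewrite E1 E2; reflexivity); rewrite -!catA.
Qed.

Lemma col_ok_catr st sr c cr w cs : size cr = size sr -> size c = size st ->
  col_ok st c w cs -> col_ok (st ++ sr) (c ++ cr) w (map (cat^~ cr) cs).
Proof.
move=> Hr; elim: w st c cs => [|[k e] w IH] st c cs Hs; first by case: cs.
case/col_ok_cons=> c' [cs' [-> [_ [s1 [E [Sc H]]]]]].
apply/col_ok_cons; exists (c' ++ cr), (map (cat^~ cr) cs'); split => //; split.
  by rewrite !size_cat Hs Hr.
exists (s1 ++ sr); rewrite step_or_catr ?E; last exact: step_or_bound E.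
split => //; split; first by apply/slice_col_catr => //; [exact: step_or_bound E | exists c'].
by apply: IH => //; exact: slice_col_size Hs E Sc.
Qed.

Lemma slice_col_const st x st' (y : X) : step_or st x = Some st' ->
  slice_col st (map (fun=> y) st) x (map (fun=> y) st').
Proof.
case: x => k e E; have le_ke := step_or_bound E; move: E; rewrite /step_or le_ke.
case: e le_ke => [o||b] /= le_ke.
- by case=> <-; exists y; rewrite map_cat /= map_take map_drop addn0.
- rewrite -map_drop; case E: (drop k st) (size_drop k st) => [|a [|a2 r]] //= Hd; try lia.
  have Er : drop (k + 2) st = r by rewrite addnC -drop_drop E /= drop0.
  by case: ifP => // _ [<-]; split => //; rewrite map_cat map_take Er.
- case=> <-; apply/slice_col_crossE; rewrite -!map_drop.
  case E: (drop k st) (size_drop k st) => [|a [|a2 r]] //= Hd; try lia.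
  have Er : drop (k + 2) st = r by rewrite addnC -drop_drop E /= drop0.
  by rewrite !map_cat map_take Er /cross_colors; case: b => /=; rewrite qact_idem.
Qed.

Lemma col_ok_const st w st' (y : X) : run st w = Some st' ->
  exists cs, col_ok st (map (fun=> y) st) w cs /\
             last (map (fun=> y) st) cs = map (fun=> y) st'.
Proof.
elim: w st => [|x w IH] st; first by case=> <-; exists [::].
rewrite run_cons; case E: (step_or st x) => [s1|] // /IH [cs [H1 H2]].
exists (map (fun=> y) s1 :: cs); split => //.
apply/col_ok_step; first exact: E.
exists (map (fun=> y) s1), cs; rewrite size_map; do 3 split => //.
exact: slice_col_const.
Qed.

Lemma slice_col_cup0 st c o c' : slice_col st c (0, Cup o) c' <-> exists y, c' = y :: y :: c.
Proof. by rewrite /= ?take0 ?drop0. Qed.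
Lemma slice_col_cup1 st (x : X) c o c' :
  slice_col st (x :: c) (1, Cup o) c' <-> exists y, c' = x :: y :: y :: c.
Proof. by rewrite /= ?take0 ?drop0. Qed.
Lemma slice_col_cap0 st (x1 x2 : X) c c' :
  slice_col st (x1 :: x2 :: c) (0, Cap) c' <-> x1 = x2 /\ c' = c.
Proof. by []. Qed.
Lemma slice_col_cap1 st (x0 x1 x2 : X) c c' :
  slice_col st (x0 :: x1 :: x2 :: c) (1, Cap) c' <-> x1 = x2 /\ c' = x0 :: c.
Proof. by rewrite /= ?take0. Qed.
Lemma slice_col_cross0 o1 o2 st (x1 x2 : X) c b c' :
  slice_col (o1 :: o2 :: st) (x1 :: x2 :: c) (0, Cross b) c' <->
  c' = cross_colors b o1 o2 x1 x2 ++ c.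
Proof. by rewrite slice_col_crossE. Qed.
Lemma slice_col_cross1 o0 o1 o2 st (x0 x1 x2 : X) c b c' :
  slice_col (o0 :: o1 :: o2 :: st) (x0 :: x1 :: x2 :: c) (1, Cross b) c' <->
  c' = x0 :: cross_colors b o1 o2 x1 x2 ++ c.
Proof. by rewrite slice_col_crossE /= ?take0. Qed.

End Colorings.

(** * Local moves *)

Inductive base_move : word -> word -> Prop :=
| bm_far e1 d e2 :
    base_move [:: (0, e1); (eout e1 + d, e2)] [:: (ein e1 + d, e2); (0, e1)]
| bm_snake1 o : base_move [:: (0, Cup o); (1, Cap)] [::]
| bm_snake2 o : base_move [:: (1, Cup o); (0, Cap)] [::]
| bm_cap_slide b : base_move [:: (0, Cross b); (1, Cap)] [:: (1, Cross (~~ b)); (0, Cap)]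
| bm_cup_slide o b :
    base_move [:: (0, Cup o); (1, Cross b)] [:: (1, Cup o); (0, Cross (~~ b))]
| bm_R1a o b : base_move [:: (1, Cup o); (0, Cross b); (1, Cap)] [::]
| bm_R1b o b : base_move [:: (0, Cup o); (1, Cross b); (0, Cap)] [::]
| bm_R2 b : base_move [:: (0, Cross b); (0, Cross (~~ b))] [::]
| bm_R3 b1 b2 b3 : ~~ ((b1 == b3) && (b2 != b1)) ->
    base_move [:: (0, Cross b1); (1, Cross b2); (0, Cross b3)]
              [:: (1, Cross b3); (0, Cross b2); (1, Cross b1)].

Lemma base_move_lhs_nonnil L R : base_move L R -> L <> [::].
Proof. by case. Qed.

Lemma move_shift_base L R : move L R ->
  exists k L0 R0, [/\ L = shift k L0, R = shift k R0 & base_move L0 R0].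
Proof.
case=> [k1 e1 k2 e2 le_k | k o | k o | k b | k o b | k o b | k o b | k b | k b1 b2 b3 H].
- exists k1, [:: (0, e1); (eout e1 + (k2 - k1 - eout e1), e2)],
    [:: (ein e1 + (k2 - k1 - eout e1), e2); (0, e1)]; split; last exact: bm_far.
  + by rewrite /shift /= addn0; congr (_ :: (_, _) :: _); lia.
  + by rewrite /shift /= addn0; congr ((_, _) :: _); lia.
all: match goal with |- exists _ _ _, [/\ ?L = _, ?R = _ & _] =>
  exists k, [seq (x.1 - k, x.2) | x <- L], [seq (x.1 - k, x.2) | x <- R] end.
all: by rewrite /= ?subnn ?subSnn; split; [rewrite /shift /= ?addn0 ?addn1.. | constructor].
Qed.

Section LocalInvariance.
Variable X : quandle.
Implicit Types (st : seq bool) (c cl cr : seq X) (cs : seq (seq X)) (W L R : word).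

Definition col_transfer L R := forall st c cs s1 s2, size c = size st ->
  run st L = Some s1 -> run st R = Some s2 -> col_ok st c L cs ->
  s1 = s2 /\ exists cs', col_ok st c R cs' /\ last c cs' = last c cs.

(* A move cannot destroy non-triviality because its filling is monochromatic
   as soon as the two boundary levels are. *)
Definition mono_filling W := forall st c cs s x, size c = size st ->
  run st W = Some s -> col_ok st c W cs ->
  (forall z, List.In z c -> z = x) -> (forall z, List.In z (last c cs) -> z = x) ->
  forall z, List.In z (flatten cs) -> z = x.

Lemma run_shift_bound st k W s : run st (shift k W) = Some s -> W <> [::] -> k <= size st.
Proof.
case: W => [|[k0 e] W] //; rewrite /shift map_cons run_cons /step_or /=.
by case: ifP => // le_k _ _; lia.
Qed.

Lemma in_flatten_map_cat cl cs z : List.In z (flatten (map (cat cl) cs)) ->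
  List.In z cl \/ List.In z (flatten cs).
Proof.
elim: cs => [|c cs IH] //= /in_cat [/in_cat [] | /IH []]; auto.
all: by move=> H; right; apply/in_cat; auto.
Qed.

Lemma col_transfer_shift k L R : col_transfer L R -> L <> [::] \/ R <> [::] ->
  col_transfer (shift k L) (shift k R).
Proof.
move=> TLR NE st c cs s1 s2 Hs E1 E2 Hc.
have le_k : k <= size st.
  by case: NE => NE; [exact: run_shift_bound E1 NE | exact: run_shift_bound E2 NE].
have [sl [sr [Est Hsl]]] := split_at le_k.
have [cl [cr [Ec Hcl]]] : exists cl cr, c = cl ++ cr /\ size cl = size sl.
  by apply: split_at; rewrite Hs Est size_cat leq_addr.
subst st c k; move: E1 E2 Hc; rewrite !run_shift.
case E1: (run sr L) => [t1|] // [<-]; case E2: (run sr R) => [t2|] // [<-].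
case/(col_ok_shift _ _ _ _ Hcl) => cs0 [-> H0].
have Hs' : size cr = size sr by move: Hs; rewrite !size_cat Hcl; lia.
have [-> [cs' [H1 H2]]] := TLR _ _ _ _ _ Hs' E1 E2 H0.
split => //; exists (map (cat cl) cs'); rewrite !last_map H2; split => //.
by apply/col_ok_shift => //; exists cs'.
Qed.

Lemma mono_filling_shift k W : mono_filling W -> mono_filling (shift k W).
Proof.
move=> MW st c cs s x Hs E Hc Hx1 Hx2 z Hz.
have [WE|WNE] : W = [::] \/ W <> [::] by case: (W); [left | right].
  by move: Hc Hz Hx2; rewrite WE; case: cs.
have [sl [sr [Est Hsl]]] := split_at (run_shift_bound E WNE).
have [cl [cr [Ec Hcl]]] : exists cl cr, c = cl ++ cr /\ size cl = size sl.
  by apply: split_at; rewrite Hs Est size_cat leq_addr.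
subst st c k; move: E Hc; rewrite run_shift.
case E: (run sr W) => [t|] // _ /(col_ok_shift _ _ _ _ Hcl) [cs0 [Ecs H0]]; subst cs.
have Hs' : size cr = size sr by move: Hs; rewrite !size_cat Hcl; lia.
case/in_flatten_map_cat: Hz => Hz; first by apply: Hx1; apply/in_cat; left.
apply: (MW _ _ _ _ _ Hs' E H0) Hz => z' Hz'.
- by apply: Hx1; apply/in_cat; right.
- by apply: Hx2; rewrite last_map; apply/in_cat; right.
Qed.

Definition local_invariant L R :=
  [/\ col_transfer L R, col_transfer R L, mono_filling L & mono_filling R].

Lemma local_invariant_shift k L R : local_invariant L R -> L <> [::] \/ R <> [::] ->
  local_invariant (shift k L) (shift k R).
Proof.
case=> TLR TRL ML MR NE; split; try exact: mono_filling_shift.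
- exact: col_transfer_shift.
- by apply: col_transfer_shift; case: NE; auto.
Qed.

End LocalInvariance.

Section FarCommutation.
Variables (X : quandle) (e1 : elem) (d : nat) (e2 : elem).
Implicit Types (st : seq bool) (c : seq X) (cs : seq (seq X)).

Local Notation farL := [:: (0, e1); (eout e1 + d, e2)].
Local Notation farR := [:: (ein e1 + d, e2); (0, e1)].

(* Both words act by [e1] on the first [ein e1] strands [A] and by [e2] on the rest [B]. *)
Definition far_split st c A B A' B' cA cB cA' cB' :=
  [/\ st = A ++ B, c = cA ++ cB, size A = ein e1, size cA = size A &
  [/\ size cB = size B, step_or A (0, e1) = Some A', step_or B (d, e2) = Some B',
      slice_col A cA (0, e1) cA' & slice_col B cB (d, e2) cB']].

Section Split.
Variables (st : seq bool) (c : seq X) (A B A' B' : seq bool) (cA cB cA' cB' : seq X).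
Hypothesis F : far_split st c A B A' B' cA cB cA' cB'.

Lemma far_split_sizes : [/\ size A' = eout e1, size cA' = size A' & size cB' = size B'].
Proof.
case: F => _ _ HA HcA [HcB EA EB SA SB]; split.
- by have := step_or_size EA; rewrite HA; lia.
- exact: slice_col_size HcA EA SA.
- exact: slice_col_size HcB EB SB.
Qed.

Lemma far_run : run st farL = Some (A' ++ B') /\ run st farR = Some (A' ++ B').
Proof.
have [HA' _ _] := far_split_sizes; case: F => -> _ HA _ [_ EA EB _ _].
have stepA S : step_or (A ++ S) (0, e1) = Some (A' ++ S) by rewrite step_or_catr ?EA // HA.
have stepB S : step_or (S ++ B) (size S + d, e2) = Some (S ++ B') by rewrite step_or_shift EB.
split.
- by rewrite (run_step _ (stepA _)) -HA' (run_step _ (stepB _)).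
- by rewrite -HA (run_step _ (stepB _)) (run_step _ (stepA _)).
Qed.

Lemma far_colL : col_ok st c farL [:: cA' ++ cB; cA' ++ cB'].
Proof.
have [HA' HcA' HcB'] := far_split_sizes.
case: F => -> -> HA HcA [HcB EA EB SA SB].
have Hin : 0 + ein e1 <= size A by rewrite HA.
apply/col_ok_cons; exists (cA' ++ cB), [:: cA' ++ cB']; do 2 split => //.
  by rewrite !size_cat HcA HcB.
exists (A' ++ B); rewrite step_or_catr // EA; do 2 split => //.
  by apply/slice_col_catr => //; exists cA'.
apply/col_ok_cons; exists (cA' ++ cB'), [::]; do 2 split => //.
  by rewrite !size_cat HcA' HcB.
exists (A' ++ B'); rewrite -HA' step_or_shift EB; do 2 split => //.
by apply/slice_col_shift => //; exists cB'.
Qed.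

Lemma far_colR : col_ok st c farR [:: cA ++ cB'; cA' ++ cB'].
Proof.
have [HA' HcA' HcB'] := far_split_sizes.
case: F => -> -> HA HcA [HcB EA EB SA SB].
have Hin : 0 + ein e1 <= size A by rewrite HA.
apply/col_ok_cons; exists (cA ++ cB'), [:: cA' ++ cB']; do 2 split => //.
  by rewrite !size_cat HcA HcB.
exists (A ++ B'); rewrite -HA step_or_shift EB; do 2 split => //.
  by apply/slice_col_shift => //; exists cB'.
apply/col_ok_cons; exists (cA' ++ cB'), [::]; do 2 split => //.
  by rewrite !size_cat HcA HcB'.
exists (A' ++ B'); rewrite step_or_catr // EA; do 2 split => //.
by apply/slice_col_catr => //; exists cA'.
Qed.

End Split.

Lemma far_colL_split st c cs : size c = size st -> col_ok st c farL cs ->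
  exists A B A' B' cA cB cA' cB',
    far_split st c A B A' B' cA cB cA' cB' /\ cs = [:: cA' ++ cB; cA' ++ cB'].
Proof.
move=> Hs /col_ok_cons [c1 [cs1 [-> [_ [st1 [E1 [S1 H1]]]]]]].
have [A [B [EA HA]]] := split_at (step_or_bound E1).
have [cA [cB [EcA HcA]]] : exists cA cB, c = cA ++ cB /\ size cA = size A.
  by apply: split_at; rewrite Hs EA size_cat leq_addr.
subst st c.
have HcB : size cB = size B by move: Hs; rewrite !size_cat HcA; lia.
have Hin : 0 + ein e1 <= size A by rewrite HA.
move: E1 S1 H1; rewrite step_or_catr //.
case EA: (step_or A (0, e1)) => [A'|] // [<-] /(slice_col_catr _ _ _ HcA Hin) [cA' [-> SA]].
have HA' : size A' = eout e1 by have := step_or_size EA; rewrite HA; lia.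
have HcA' : size cA' = size A' by apply: slice_col_size HcA EA SA.
case/col_ok_cons=> c2 [cs2 [-> [_ [st2 [E2 [S2 H2]]]]]].
move: E2 S2 H2; rewrite -HA' step_or_shift.
case EB: (step_or B (d, e2)) => [B'|] // [<-] /(slice_col_shift _ _ _ _ _ HcA') [cB' [-> SB]].
by case: cs2 => // _; exists A, B, A', B', cA, cB, cA', cB'.
Qed.

Lemma far_colR_split st c cs : size c = size st -> col_ok st c farR cs ->
  exists A B A' B' cA cB cA' cB',
    far_split st c A B A' B' cA cB cA' cB' /\ cs = [:: cA ++ cB'; cA' ++ cB'].
Proof.
move=> Hs /col_ok_cons [c1 [cs1 [-> [_ [st1 [E1 [S1 H1]]]]]]].
have [A [B [EA HA]]] : exists A B, st = A ++ B /\ size A = ein e1.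
  by apply: split_at; have := step_or_bound E1; lia.
have [cA [cB [EcA HcA]]] : exists cA cB, c = cA ++ cB /\ size cA = size A.
  by apply: split_at; rewrite Hs EA size_cat leq_addr.
subst st c.
have HcB : size cB = size B by move: Hs; rewrite !size_cat HcA; lia.
have Hin : 0 + ein e1 <= size A by rewrite HA.
move: E1 S1 H1; rewrite -HA step_or_shift.
case EB: (step_or B (d, e2)) => [B'|] // [<-] /(slice_col_shift _ _ _ _ _ HcA) [cB' [-> SB]].
have HcB' : size cB' = size B' by apply: slice_col_size HcB EB SB.
case/col_ok_cons=> c2 [cs2 [-> [_ [st2 [E2 [S2 H2]]]]]].
move: E2 S2 H2; rewrite step_or_catr //.
case EA: (step_or A (0, e1)) => [A'|] // [<-] /(slice_col_catr _ _ _ HcA Hin) [cA' [-> SA]].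
by case: cs2 => // _; exists A, B, A', B', cA, cB, cA', cB'.
Qed.

Lemma far_local : local_invariant X farL farR.
Proof.
split.
- move=> st c cs s1 s2 Hs E1 E2 Hc.
  have [A [B [A' [B' [cA [cB [cA' [cB' [F ->]]]]]]]]] := far_colL_split Hs Hc.
  have [RL RR] := far_run F; move: E1 E2; rewrite RL RR => -[<-] [<-].
  by split => //; exists [:: cA ++ cB'; cA' ++ cB']; split => //; apply: far_colR F.
- move=> st c cs s1 s2 Hs E1 E2 Hc.
  have [A [B [A' [B' [cA [cB [cA' [cB' [F ->]]]]]]]]] := far_colR_split Hs Hc.
  have [RL RR] := far_run F; move: E1 E2; rewrite RL RR => -[<-] [<-].
  by split => //; exists [:: cA' ++ cB; cA' ++ cB']; split => //; apply: far_colL F.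
- move=> st c cs s x Hs _ Hc Hx1 Hx2 z.
  have [A [B [A' [B' [cA [cB [cA' [cB' [[_ Ec _ _ _] Ecs]]]]]]]]] := far_colL_split Hs Hc.
  subst c cs; move: Hx2 => /= Hx2.
  rewrite cats0 !in_cat => -[[] | []] Hz;
    [apply: Hx2 | apply: Hx1 | apply: Hx2 | apply: Hx2]; apply/in_cat; auto.
- move=> st c cs s x Hs _ Hc Hx1 Hx2 z.
  have [A [B [A' [B' [cA [cB [cA' [cB' [[_ Ec _ _ _] Ecs]]]]]]]]] := far_colR_split Hs Hc.
  subst c cs; move: Hx2 => /= Hx2.
  rewrite cats0 !in_cat => -[[] | []] Hz;
    [apply: Hx1 | apply: Hx2 | apply: Hx2 | apply: Hx2]; apply/in_cat; auto.
Qed.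

End FarCommutation.

Lemma forall_or_eq (X : Type) (a x : X) (P : X -> Prop) :
  (forall z, a = z \/ P z -> z = x) -> a = x /\ (forall z, P z -> z = x).
Proof. by move=> H; split=> [|z Pz]; apply: H; [left | right]. Qed.

(* Base moves are checked exhaustively on the (at most three) strands they touch;
   the quandle axioms enter through [qact_idem] (R1), [qactK] (R2) and
   [qact_dist] (R3). *)
Ltac step_solve := first [ exact: step_cup0 | exact: step_cup1
  | rewrite step_cap0 /=; reflexivity | rewrite step_cap1 /=; reflexivity
  | exact: step_cross0 | exact: step_cross1 ].

Ltac col_forward H :=
  repeat (eapply col_ok_step in H; [| step_solve];
    let c' := fresh "c" in let Hsc := fresh "Hsc" in
    case: H => c' [? [-> [_ [Hsc H]]]];
    first [ move/slice_col_cross0: Hsc => Hsc | move/slice_col_cross1: Hsc => Hsc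
          | move/slice_col_cap0: Hsc => [? Hsc] | move/slice_col_cap1: Hsc => [? Hsc]
          | move/slice_col_cup0: Hsc => [? Hsc] | move/slice_col_cup1: Hsc => [? Hsc] ];
    subst c');
  match type of H with col_ok _ _ [::] ?cs => case: cs H => // _ end.

Ltac slice_build := first [ apply/slice_col_cross0; reflexivity
  | apply/slice_col_cross1; reflexivity
  | apply/slice_col_cap0; split; [| reflexivity] | apply/slice_col_cap1; split; [| reflexivity]
  | apply/slice_col_cup0; eexists; reflexivity | apply/slice_col_cup1; eexists; reflexivity ].

Ltac col_backward :=
  repeat (apply/col_ok_step; [step_solve | do 2 eexists; split; [reflexivity |
          split; [simpl; lia | split; [slice_build |]]]]);
  try lazymatch goal with |- col_ok _ ?c [::] ?cs =>
    let T := type of c in unify cs (@nil T); exact: I end.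

Ltac qfix := repeat match goal with
  | H : qact _ _ ?b = ?b |- _ => apply qact_fix in H
  | H : ?b = qact _ _ ?b |- _ => apply esym, qact_fix in H
  | H : qop _ ?b = ?b |- _ => apply (qact_fix true) in H
  | H : ?b = qop _ ?b |- _ => apply esym, (qact_fix true) in H
  | H : qdiv _ ?b = ?b |- _ => apply (qact_fix false) in H
  | H : ?b = qdiv _ ?b |- _ => apply esym, (qact_fix false) in H end.

Ltac qsimp := do 2 rewrite ?qactK ?qactNK ?qact_idem ?qopK ?qdivK ?qdiv_idem ?qidem.

Ltac qdist_solve :=
  first [ by rewrite qact_dist; qsimp | by apply/esym; rewrite qact_dist; qsimp ].

Ltac colors_solve :=
  qfix; try subst; rewrite /cross_colors /=;
  repeat match goal with |- _ :: _ = _ :: _ => congr (_ :: _) end;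
  try reflexivity; qsimp; try done; try qdist_solve.

Ltac transfer_close := eexists; split; [col_backward | idtac]; colors_solve.

Ltac orient_cases E :=
  repeat (match type of E with context [if ?cond then _ else _] =>
            match cond with context [?v] =>
              is_var v; lazymatch type of v with bool => destruct v end end end;
          rewrite /= in E);
  try discriminate.

Ltac state_cases st c Hs :=
  case: st => [|o1 [|o2 [|o3 st]]]; case: c => [|x1 [|x2 [|x3 c]]] Hs;
  simpl in Hs; try discriminate.

Ltac transfer_solve :=
  let st := fresh "st" in let c := fresh "c" in let Hs := fresh "Hs" in
  let E1 := fresh "E1" in let E2 := fresh "E2" in let Hc := fresh "Hc" in
  repeat match goal with b : bool |- _ => destruct b end;
  move=> st c ? ? ?; state_cases st c Hs; move=> E1 E2 Hc;
  rewrite /= ?take0 ?drop0 ?addn0 ?add0n /= in E1 E2; orient_cases E1; orient_cases E2;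
  case: E1 => <-; case: E2 => <-; split => //; col_forward Hc; transfer_close.

Ltac in_cases := repeat match goal with
  | H : List.In _ (_ ++ _) |- _ => case/in_cat: H => H
  | H : List.In _ (_ :: _) |- _ => case: (List.in_inv H) => {}H
  | H : List.In _ [::] |- _ => case: H
  | H : _ \/ _ |- _ => case: H => H
  | H : False |- _ => case: H
  end.

Ltac mono_hyps H := simpl in H;
  repeat (let E := fresh "E" in let H' := fresh "H" in
          have [E H'] := forall_or_eq H; clear H; rename H' into H).

Ltac mono_solve :=
  let st := fresh "st" in let c := fresh "c" in let Hs := fresh "Hs" in
  let E := fresh "E" in let Hc := fresh "Hc" in let Hx1 := fresh "Hx1" in
  let Hx2 := fresh "Hx2" in let z := fresh "z" in let Hz := fresh "Hz" in
  repeat match goal with b : bool |- _ => destruct b end;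
  move=> st c ? ? ?; state_cases st c Hs; move=> E Hc Hx1 Hx2 z Hz;
  rewrite /= ?take0 ?drop0 ?addn0 ?add0n /= in E; orient_cases E;
  revert Hx2 Hz; col_forward Hc; move=> Hx2 Hz;
  unfold cross_colors in Hx2, Hz; simpl in Hx2, Hz; rewrite ?cats0 in Hz;
  mono_hyps Hx1; mono_hyps Hx2; qfix; subst; in_cases; subst;
  by [qsimp | apply: Hx1].

Section BaseMoves.
Variable X : quandle.

Lemma mono_filling_nil : mono_filling X [::].
Proof. by move=> ? ? []. Qed.

Lemma snake1_transfer o : col_transfer X [:: (0, Cup o); (1, Cap)] [::] /\
                          col_transfer X [::] [:: (0, Cup o); (1, Cap)].
Proof. by split; transfer_solve. Qed.

Lemma snake1_mono o : mono_filling X [:: (0, Cup o); (1, Cap)].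
Proof. mono_solve. Qed.

Lemma snake2_transfer o : col_transfer X [:: (1, Cup o); (0, Cap)] [::] /\
                          col_transfer X [::] [:: (1, Cup o); (0, Cap)].
Proof. by split; transfer_solve. Qed.

Lemma snake2_mono o : mono_filling X [:: (1, Cup o); (0, Cap)].
Proof. mono_solve. Qed.

Lemma cap_slide_transfer b :
  col_transfer X [:: (0, Cross b); (1, Cap)] [:: (1, Cross (~~ b)); (0, Cap)] /\
  col_transfer X [:: (1, Cross (~~ b)); (0, Cap)] [:: (0, Cross b); (1, Cap)].
Proof. by split; transfer_solve. Qed.

Lemma cap_slide_mono b :
  mono_filling X [:: (0, Cross b); (1, Cap)] /\ mono_filling X [:: (1, Cross (~~ b)); (0, Cap)].
Proof. by split; mono_solve. Qed.

Lemma cup_slide_transfer o b :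
  col_transfer X [:: (0, Cup o); (1, Cross b)] [:: (1, Cup o); (0, Cross (~~ b))] /\
  col_transfer X [:: (1, Cup o); (0, Cross (~~ b))] [:: (0, Cup o); (1, Cross b)].
Proof. by split; transfer_solve. Qed.

Lemma cup_slide_mono o b :
  mono_filling X [:: (0, Cup o); (1, Cross b)] /\ mono_filling X [:: (1, Cup o); (0, Cross (~~ b))].
Proof. by split; mono_solve. Qed.

Lemma R1a_transfer o b : col_transfer X [:: (1, Cup o); (0, Cross b); (1, Cap)] [::] /\
                         col_transfer X [::] [:: (1, Cup o); (0, Cross b); (1, Cap)].
Proof. by split; transfer_solve. Qed.

Lemma R1a_mono o b : mono_filling X [:: (1, Cup o); (0, Cross b); (1, Cap)].
Proof. mono_solve. Qed.

Lemma R1b_transfer o b : col_transfer X [:: (0, Cup o); (1, Cross b); (0, Cap)] [::] /\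
                         col_transfer X [::] [:: (0, Cup o); (1, Cross b); (0, Cap)].
Proof. by split; transfer_solve. Qed.

Lemma R1b_mono o b : mono_filling X [:: (0, Cup o); (1, Cross b); (0, Cap)].
Proof. mono_solve. Qed.

Lemma R2_transfer b : col_transfer X [:: (0, Cross b); (0, Cross (~~ b))] [::] /\
                      col_transfer X [::] [:: (0, Cross b); (0, Cross (~~ b))].
Proof. by split; transfer_solve. Qed.

Lemma R2_mono b : mono_filling X [:: (0, Cross b); (0, Cross (~~ b))].
Proof. mono_solve. Qed.

Lemma R3_transfer b1 b2 b3 : ~~ ((b1 == b3) && (b2 != b1)) ->
  col_transfer X [:: (0, Cross b1); (1, Cross b2); (0, Cross b3)]
                 [:: (1, Cross b3); (0, Cross b2); (1, Cross b1)] /\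
  col_transfer X [:: (1, Cross b3); (0, Cross b2); (1, Cross b1)]
                 [:: (0, Cross b1); (1, Cross b2); (0, Cross b3)].
Proof. by case: b1; case: b2; case: b3 => // _; split; transfer_solve. Qed.

Lemma R3_mono b1 b2 b3 :
  mono_filling X [:: (0, Cross b1); (1, Cross b2); (0, Cross b3)] /\
  mono_filling X [:: (1, Cross b3); (0, Cross b2); (1, Cross b1)].
Proof. by split; mono_solve. Qed.

Lemma base_move_local L R : base_move L R -> local_invariant X L R.
Proof.
case=> [e1 d e2 | o | o | b | o b | o b | o b | b | b1 b2 b3 H]; first exact: far_local.
- by have [? ?] := snake1_transfer o; split; [| | exact: snake1_mono | exact: mono_filling_nil].
- by have [? ?] := snake2_transfer o; split; [| | exact: snake2_mono | exact: mono_filling_nil].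
- by have [? ?] := cap_slide_transfer b; have [? ?] := cap_slide_mono b; split.
- by have [? ?] := cup_slide_transfer o b; have [? ?] := cup_slide_mono o b; split.
- by have [? ?] := R1a_transfer o b; split; [| | exact: R1a_mono | exact: mono_filling_nil].
- by have [? ?] := R1b_transfer o b; split; [| | exact: R1b_mono | exact: mono_filling_nil].
- by have [? ?] := R2_transfer b; split; [| | exact: R2_mono | exact: mono_filling_nil].
- by have [? ?] := R3_transfer H; have [? ?] := R3_mono b1 b2 b3; split.
Qed.

Lemma move_local L R : move L R -> local_invariant X L R.
Proof.
case/move_shift_base=> k [L0 [R0 [-> -> B]]].
by apply: local_invariant_shift; [exact: base_move_local | left; exact: base_move_lhs_nonnil B].
Qed.

End BaseMoves.

(** * Invariance of non-trivial colorings *)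

Section NontrivialColorings.
Variable X : quandle.
Implicit Types (c : seq X) (cs : seq (seq X)).

Definition nontriv (l : seq X) := exists x y, x <> y /\ List.In x l /\ List.In y l.

Definition nontriv_col (a : seq bool) (w : word) (c0 cf : seq X) :=
  exists cs, [/\ size c0 = size a, col_ok a c0 w cs, last c0 cs = cf &
                 nontriv (c0 ++ flatten cs)].

Lemma in_last c cs z : List.In z (last c cs) -> List.In z c \/ List.In z (flatten cs).
Proof.
elim: cs c => [|c' cs IH] c /=; first by left.
by case/IH => H; right; apply/in_cat; auto.
Qed.

Lemma nontriv_sub (l l' : seq X) :
  nontriv l -> (forall z, List.In z l -> List.In z l') -> nontriv l'.
Proof. by move=> [x [y [Nxy [Hx Hy]]]] sub; exists x, y; auto. Qed.

Lemma in_flatten_map (f : seq X -> seq X) cs z :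
  (forall c y, List.In y c -> List.In y (f c)) ->
  List.In z (flatten cs) -> List.In z (flatten (map f cs)).
Proof.
move=> sub_f; elim: cs => [|c cs IH] //= /in_cat Hz; apply/in_cat.
by case: Hz; auto.
Qed.

Lemma nontriv_replace (c0 : seq X) cs1 cs2 cs2' cs3 :
  (forall x, (forall z, List.In z (last c0 cs1) -> z = x) ->
             (forall z, List.In z (last (last c0 cs1) cs2) -> z = x) ->
             forall z, List.In z (flatten cs2) -> z = x) ->
  last (last c0 cs1) cs2' = last (last c0 cs1) cs2 ->
  nontriv (c0 ++ flatten (cs1 ++ cs2 ++ cs3)) -> nontriv (c0 ++ flatten (cs1 ++ cs2' ++ cs3)).
Proof.
move=> mono El [u [v [Nuv [Hu Hv]]]]; apply: NNPP => Nnew.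
set T := c0 ++ _ in Nnew.
have [x Hx] : exists x, forall z, List.In z T -> z = x.
  case: (classic (exists t, List.In t T)) => [[t Ht] | Nt]; [exists t | exists u] => z Hz.
  - by apply: NNPP => Nzt; apply: Nnew; exists z, t.
  - by case: Nt; exists z.
have in_T1 z : List.In z (last c0 cs1) -> List.In z T.
  rewrite /T !flatten_cat !in_cat => /in_last; tauto.
have in_T2 z : List.In z (last (last c0 cs1) cs2) -> List.In z T.
  rewrite -El => /in_last [/in_T1 // |]; rewrite /T !flatten_cat !in_cat; tauto.
have old z : List.In z (c0 ++ flatten (cs1 ++ cs2 ++ cs3)) -> z = x.
  rewrite !flatten_cat !in_cat => Hz.
  have [Hcs2 | /Hx //] : List.In z (flatten cs2) \/ List.In z T.
    by rewrite /T !flatten_cat !in_cat; tauto.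
  by apply: (mono x) Hcs2 => y Hy; apply: Hx; [apply: in_T1 | apply: in_T2].
by apply: Nuv; rewrite (old u Hu) (old v Hv).
Qed.

Lemma nontriv_col_replace a p L R q (c0 cf : seq X) b : col_transfer X L R -> mono_filling X L ->
  run a (p ++ R ++ q) = Some b ->
  nontriv_col a (p ++ L ++ q) c0 cf -> nontriv_col a (p ++ R ++ q) c0 cf.
Proof.
move=> TLR ML ER [cs [Hs0 Hc Hl Hnt]].
case/col_ok_cat: Hc => cs1 [cs23 [s1 [Ecs H1 E1 /col_ok_cat [cs2 [cs3 [s2 [Ecs23 H2 E2 H3]]]]]]].
subst cs cs23.
move: ER; rewrite run_cat E1 /= run_cat; case ER: (run s1 R) => [s2'|] // _.
have Hsz : size (last c0 cs1) = size s1 := col_ok_size H1 Hs0 E1.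
have [Es [cs2' [H2' Hl2]]] := TLR _ _ _ _ _ Hsz E2 ER H2; subst s2'.
exists (cs1 ++ cs2' ++ cs3); split => //.
- apply/col_ok_cat; exists cs1, (cs2' ++ cs3), s1; split => //.
  by apply/col_ok_cat; exists cs2', cs3, s2; rewrite Hl2.
- by rewrite !last_cat Hl2 -Hl !last_cat.
- apply: nontriv_replace Hl2 Hnt => x Hx1 Hx2.
  exact: ML Hsz E2 H2 Hx1 Hx2.
Qed.

Lemma Equiv_iff a b (P : word -> Prop) w w' :
  (forall u v, rstep a b u v -> P u <-> P v) -> Equiv a b w w' -> P w <-> P w'.
Proof.
move=> HP; elim=> [u v /HP | u | u v _ IH | u v x _ IH1 _ IH2] //.
- by rewrite IH.
- by rewrite IH1 IH2.
Qed.

Lemma Equiv_valid a b w w' : Equiv a b w w' -> valid a w b <-> valid a w' b.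
Proof. by apply: (Equiv_iff (P := fun u => valid a u b)) => u v [p [q [L [R [_ [_ [_ []]]]]]]]. Qed.

Lemma nontriv_col_Equiv a b w w' (c0 cf : seq X) :
  Equiv a b w w' -> nontriv_col a w c0 cf <-> nontriv_col a w' c0 cf.
Proof.
apply: (Equiv_iff (P := fun u => nontriv_col a u c0 cf)).
move=> _ _ [p [q [L [R [M [-> [-> [V1 V2]]]]]]]].
have [TLR TRL ML MR] := move_local X M.
by split; [apply: nontriv_col_replace TLR ML V2 | apply: nontriv_col_replace TRL MR V1].
Qed.

End NontrivialColorings.

(** * Cutting and closing *)

Section Persistence.
Variable X : quandle.

Lemma unknot_not_nontriv_col (c0 cf : seq X) : ~ nontriv_col [::] unknot c0 cf.
Proof.
case=> cs [Hs Hc _ [u [v [Nuv [Hu Hv]]]]]; case: c0 Hs Hc Hu Hv => // _ Hc.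
col_forward Hc => /= Hu Hv.
by apply: Nuv; case: Hu => [<- | [<- | []]]; case: Hv => [<- | [<- | []]].
Qed.

Lemma nontriv_col_closure e t s (y : X) :
  valid [:: e] t [:: e] -> valid [:: ~~ e] s [:: ~~ e] ->
  nontriv_col [:: e] t [:: y] [:: y] -> nontriv_col [::] (Defs.closure e t s) [::] ([::] : seq X).
Proof.
move=> Vt Vs [cst [_ Ht Hlt Hnt]].
have [css [Hs Hls]] := col_ok_const y Vs.
have Ht' : col_ok [:: e; ~~ e] [:: y; y] t (map (cat^~ [:: y]) cst).
  exact: (col_ok_catr (st := [:: e]) (sr := [:: ~~ e]) (c := [:: y])).
have Hs' : col_ok ([:: e] ++ [:: ~~ e]) ([:: y] ++ [:: y]) (shift 1 s) (map (cat [:: y]) css).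
  by apply/col_ok_shift => //; exists css.
have Rs : run [:: e; ~~ e] (shift 1 s) = Some [:: e; ~~ e].
  by have := run_shift [:: e] [:: ~~ e] s; rewrite Vs.
set cs := map (cat^~ [:: y]) cst ++ map (cat [:: y]) css ++ [:: [::]].
exists ([:: y; y] :: cs); split => //.
- apply/col_ok_step; first exact: step_cup0.
  exists [:: y; y], cs.
  split => //; split => //; split; first by exists y.
  apply/col_ok_cat; exists (map (cat^~ [:: y]) cst), (map (cat [:: y]) css ++ [:: [::]]).
  exists [:: e; ~~ e]; rewrite (last_map (cat^~ [:: y]) cst [:: y]) Hlt; split => //.
    exact: (run_catr [:: ~~ e] Vt).
  apply/col_ok_cat; exists (map (cat [:: y]) css), [:: [::]], [:: e; ~~ e].
  rewrite (last_map (cat [:: y]) css [:: y]) Hls; split => //.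
  apply/col_ok_step; first exact: step_cap0_negr.
  by exists [::], [::].
- by rewrite /cs /= !last_cat.
- apply: (nontriv_sub Hnt) => z /in_cat [[<- | []] | Hz] /=; first by left.
  right; right; rewrite /cs !flatten_cat; apply/in_cat; left.
  by apply: in_flatten_map Hz => c x Hx; apply/in_cat; left.
Qed.

Section Cut.
Variables (D : word) (j : nat) (o : bool) (st : seq bool).
Hypothesis R : run [::] (take j D) = Some (o :: st).

Lemma level_orE : level_or D j = o.
Proof. by rewrite /level_or R. Qed.

Lemma cutE :
  cut D j = shift 1 (take j D) ++ [:: (0, Cap), (0, Cup (~~ o)) & shift 1 (drop j D)].
Proof. by rewrite /cut level_orE. Qed.

Lemma run_cut_take : run [:: ~~ o] (shift 1 (take j D)) = Some [:: ~~ o, o & st].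
Proof. by rewrite (run_shift [:: ~~ o] [::]) R. Qed.

Lemma run_cut : run [:: ~~ o] (cut D j) = omap (cons (~~ o)) (run (o :: st) (drop j D)).
Proof.
rewrite cutE (run_cat_Some _ run_cut_take) (run_step _ (step_cap0_negl _ _)).
rewrite (run_step _ (step_cup0 _ _)) negbK.
exact: run_shift [:: ~~ o] (o :: st) (drop j D).
Qed.

Lemma cut_valid : valid [::] D [::] -> valid [:: ~~ o] (cut D j) [:: ~~ o].
Proof.
move=> V; have R2 : run (o :: st) (drop j D) = Some [::].
  by move: V; rewrite /valid -{1}(cat_take_drop j D) (run_cat_Some _ R).
by rewrite /valid run_cut R2.
Qed.

Lemma col_ok_cut (y : X) c cs1 cs2 : last [::] cs1 = y :: c ->
  col_ok [::] [::] (take j D) cs1 -> col_ok (o :: st) (y :: c) (drop j D) cs2 ->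
  size c = size st ->
  col_ok [:: ~~ o] [:: y] (cut D j)
    (map (cat [:: y]) cs1 ++ [:: c; [:: y, y & c]] ++ map (cat [:: y]) cs2).
Proof.
move=> Ecut H1 H2 Hsz; rewrite cutE.
apply/col_ok_cat; exists (map (cat [:: y]) cs1), ([:: c; [:: y, y & c]] ++ map (cat [:: y]) cs2).
exists [:: ~~ o, o & st]; split => //.
- by apply/(col_ok_shift (sl := [:: ~~ o]) (cl := [:: y]) [::] [::]) => //; exists cs1.
- exact: run_cut_take.
rewrite (last_map (cat [:: y]) cs1 [::]) Ecut.
apply/col_ok_step; first exact: step_cap0_negl.
exists c, ([:: y, y & c] :: map (cat [:: y]) cs2); split => //; split; first by rewrite /= Hsz.
split => //; apply/col_ok_step; first exact: step_cup0.
exists [:: y, y & c], (map (cat [:: y]) cs2); do 2 split => //.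
split; first by apply/slice_col_cup0; exists y.
rewrite negbK; apply/(col_ok_shift (sl := [:: ~~ o]) (cl := [:: y]) (o :: st)) => //.
by exists cs2.
Qed.

Lemma nontriv_col_cut : nontriv_col [::] D [::] ([::] : seq X) ->
  exists y : X, nontriv_col [:: ~~ o] (cut D j) [:: y] [:: y].
Proof.
move=> [cs [_ Hc Hl Hnt]].
move: Hc; rewrite -{1}(cat_take_drop j D) => /col_ok_cat [cs1 [cs2 [s1 [Ecs H1 R1 H2]]]].
move: R1; rewrite R => -[Es1]; subst s1 cs.
have := col_ok_size H1 erefl R; case Ecut: (last [::] cs1) H2 => [|y c] // H2 [Hsz].
have Hl2 : last (y :: c) cs2 = [::] by rewrite -Ecut -last_cat.
exists y, (map (cat [:: y]) cs1 ++ [:: c; [:: y, y & c]] ++ map (cat [:: y]) cs2).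
split => //; first exact: col_ok_cut.
- by rewrite !last_cat /= (last_map (cat [:: y]) cs2 (y :: c)) Hl2.
- apply: (nontriv_sub Hnt) => z /in_cat [[] |]; rewrite flatten_cat => /in_cat [Hz | Hz].
  all: apply/in_cat; right; rewrite !flatten_cat; apply/in_cat.
  + by left; apply: in_flatten_map Hz => *; right.
  + by right; apply/in_cat; right; apply: in_flatten_map Hz => *; right.
Qed.

End Cut.

End Persistence.

Theorem mainTheorem2 (X : quandle) (D : word) :
  knot_diagram D ->
  (exists D', Equiv [::] [::] D D' /\ nontriv_colored X D') ->
  forall j : nat, (exists o st, run [::] (take j D) = Some (o :: st)) ->
  persistent (~~ level_or D j) (cut D j).
Proof.
move=> [VD _] [D' [EqD [cs' [Hc' Hnt']]]] j [o [st Hj]].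
have ND : nontriv_col [::] D [::] ([::] : seq X).
  apply/(nontriv_col_Equiv _ _ EqD); exists cs'; split => //.
  by have := col_ok_size Hc' erefl (proj1 (Equiv_valid EqD) VD); case: last.
have [y Ncut] := nontriv_col_cut Hj ND.
rewrite (level_orE Hj).
move=> t' Et' s [Vs _] Eu.
have Nt := proj1 (nontriv_col_Equiv _ _ Et') Ncut.
have Vt := proj1 (Equiv_valid Et') (cut_valid Hj VD).
exact: unknot_not_nontriv_col (proj1 (nontriv_col_Equiv _ _ Eu) (nontriv_col_closure Vt Vs Nt)).
Qed.
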